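(* Let $p$ be a prime, $m,t\ge1$, $R^t=\mathbb{F}_{p^m}[u]/\langle u^t\rangle$, $\omega(x)=\omega_0(x)+u\omega_1(x)+\dots+u^{t-1}\omega_{t-1}(x)\in R^t[x]$ with $\omega_i(x)\in\mathbb{F}_{p^m}[x]$, and $R^{t,\omega}=R^t[x]/\langle\omega(x)\rangle$. Let $\omega_0(x)=v_1(x)^{n_1}\cdots v_l(x)^{n_l}$ be the factorization of $\omega_0(x)$ into irreducible polynomials $v_j(x)\in\mathbb{F}_{p^m}[x]$ with positive integers $n_j$. Then the ideals of $R^{t,\omega}$ and their generators have one of the following forms. (a) The trivial ideals $\langle0\rangle$ and $\langle1\rangle$. (b) Any generator of a non-trivial ideal contained in $\langle u\rangle$ has the form $$u^{(t-1)-i}\bigl(v_1(x)^{k_{1,i}}v_2(x)^{k_{2,i}}\cdots v_l(x)^{k_{l,i}}\bigr)-u^{(t-1)-(i-1)}g(x)$$ for some $0\le i\le t-2$, $g(x)\in R^{t,\omega}$, and $0\le k_{j,i}\le n_j$ ($1\le j\le l$), not all $k_{j,i}=n_j$. In fact, any such ideal $I$ has the form $$I=\Bigl\langle u^{(t-1)-i_1}\bigl(v_1(x)^{k_{1,i_1}}\cdots v_l(x)^{k_{l,i_1}}\bigr)-u^{(t-1)-(i_1-1)}g_{i_1}(x),\ \dots,\ u^{(t-1)-i_n}\bigl(v_1(x)^{k_{1,i_n}}\cdots v_l(x)^{k_{l,i_n}}\bigr)-u^{(t-1)-(i_n-1)}g_{i_n}(x)\Bigr\rangle,$$ where $0\le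 i_1<i_2<\dots<i_n\le t-2$ and $g_{i_j}(x)\in R^{t,\omega}$ for $1\le j\le n$. (c) Any non-trivial ideal not contained in $\langle u\rangle$ has the form $$\langle v_1(x)^{k_{1}}v_2(x)^{k_{2}}\cdots v_l(x)^{k_{l}}+u\,r(x)\rangle+I,$$ where $r(x)\in R^{t,\omega}$, $0\le k_j\le n_j$, and $I$ is an ideal of $R^{t,\omega}$ contained in $\langle u\rangle$ (so $I$ is as described in (a) or (b)).
   Context: Elements of $\mathbb{F}_{p^m}[x]$ are regarded as elements of $R^{t,\omega}$ via the natural inclusion $\mathbb{F}_{p^m}\subseteq R^t$. A non-trivial ideal means an ideal different from $\langle 0\rangle$ and $\langle1\rangle$. Note $u^{t}=0$ in $R^{t,\omega}$. *)

From HB Require Import structures.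
From mathcomp Require Import all_boot all_order all_algebra.
From mathcomp Require Import boolp generic_quotient ring_quotient qpoly.
Set Implicit Arguments. Unset Strict Implicit. Unset Printing Implicit Defensive.
Import Order.TTheory GRing.Theory.
Local Open Scope ring_scope.
Local Open Scope quotient_scope.

Section Ideals.
Variable R : comNzRingType.

Definition is_ideal (I : R -> Prop) : Prop :=
  [/\ I 0, (forall a b, I a -> I b -> I (a + b)) &
      (forall r a, I a -> I (r * a))].

Definition gen_ideal (n : nat) (g : 'I_n -> R) : R -> Prop :=
  fun y => exists c : 'I_n -> R, y = \sum_(a < n) c a * g a.

Definition principal_ideal (x : R) : R -> Prop :=
  gen_ideal (fun _ : 'I_1 => x).

Definition ideal_sum (I J : R -> Prop) : R -> Prop :=
  fun y => exists a b, [/\ I a, J b & y = a + b].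

Definition ideal_eq (I J : R -> Prop) : Prop := forall y, I y <-> J y.

Definition ideal_sub (I J : R -> Prop) : Prop := forall y, I y -> J y.

Definition trivial_ideal (I : R -> Prop) : Prop :=
  ideal_eq I (principal_ideal 0) \/ ideal_eq I (principal_ideal 1).

End Ideals.

(* MathComp rings are non-zero, so the quotient ring structure needs  *)
(* <a> to be proper; when a is a unit (quotient = zero ring) we fall  *)
(* back to the zero ideal.  In the theorem below a is never a unit.   *)
Section PrincipalQuotient.
Variables (R : comNzRingType) (a : R).

Definition pideal_pred : pred R := fun y =>
  if `[< ~ exists c, c * a = 1 >] then `[< exists c, y = c * a >] else y == 0.

Lemma pideal_pred_closed : idealr_closed pideal_pred.
Proof.
rewrite /idealr_closed /pideal_pred.
case: (boolP `[< ~ exists c, c * a = 1 >]) => [/asboolP nu | _]; split.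
- by apply/asboolP; exists 0; rewrite mul0r.
- by apply/negP => /asboolP [c hc]; apply: nu; exists c; rewrite -hc.
- move=> r x y /asboolP [cx ->] /asboolP [cy ->]; apply/asboolP.
  by exists (r * cx + cy); rewrite mulrDl mulrA.
- by apply/eqP.
- by apply/negP => /eqP /eqP; rewrite oner_eq0.
- by move=> r x y; rewrite !unfold_in /= => /eqP -> /eqP ->; rewrite mulr0 addr0.
Qed.

HB.instance Definition _ := isIdealr.Build R pideal_pred pideal_pred_closed.

End PrincipalQuotient.

Definition pquot (R : comNzRingType) (a : R) : comNzRingType :=
  {ideal_quot (pideal_pred a : idealr R)}.

(* R^t = F[u]/<u^t>  (qpoly: polynomials in u reduced modulo u^t, t >= 1) *)
Definition Rt (F : finFieldType) (t : nat) : comNzRingType :=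
  {poly %/ ('X^t : {poly F})}.

Definition uRt (F : finFieldType) (t : nat) : {poly Rt F t} :=
  (qpolyX ('X^t : {poly F}))%:P.

Definition embRt (F : finFieldType) (t : nat) (f : {poly F}) : {poly Rt F t} :=
  map_poly (qpolyC ('X^t : {poly F})) f.

Definition omega (F : finFieldType) (t : nat) (w : nat -> {poly F}) : {poly Rt F t} :=
  \sum_(i < t) uRt F t ^+ i * embRt t (w i).

Definition Rtw (F : finFieldType) (t : nat) (w : nat -> {poly F}) : comNzRingType :=
  pquot (omega t w).

Definition uW (F : finFieldType) (t : nat) (w : nat -> {poly F}) : Rtw t w :=
  \pi_(Rtw t w) (uRt F t).

Definition embW (F : finFieldType) (t : nat) (w : nat -> {poly F}) (f : {poly F}) :
  Rtw t w := \pi_(Rtw t w) (embRt t f).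

From HB Require Import structures.
From mathcomp Require Import all_boot all_order all_algebra.
From mathcomp Require Import boolp generic_quotient ring_quotient qpoly.
From mathcomp Require Import ring zify.
Set Implicit Arguments. Unset Strict Implicit. Unset Printing Implicit Defensive.
Import GRing.Theory.
Local Open Scope ring_scope.
Local Open Scope quotient_scope.

(* Write R for R^{t,omega} and e : F[x] -> R for the inclusion.  Every element
   of R is e(f) + u z, and omega_0 = prod_j v_j^{n_j} becomes a multiple of u
   in R.  For an ideal I and a level j, the f with u^j e(f) in I + u^{j+1} R
   form an ideal of F[x] containing omega_0, hence one generated by a divisor
   prod_j v_j^{k_j} of omega_0, realised by some u^j e(prod_j v_j^{k_j})
   + u^{j+1} z_j in I.  Level 0 gives (c), with J the part of I inside <u>.
   If I is inside <u>, peel its elements off level by level from j = 1: at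
   each level subtract a multiple of the level generator; a level with k = n
   contributes nothing since e(omega_0) is in uR, and u^t = 0 ends the process.
   So the generators of the levels 1 <= j <= t-1 with k <> n generate I, which
   is (b).  Case (a) needs no separate treatment: <0> is (b) with no generator
   and <1> is an instance of (c). *)

Definition prod_powers (R : comNzRingType) (l : nat) (v : 'I_l -> R)
    (k : 'I_l -> nat) : R :=
  \prod_(j < l) v j ^+ k j.

Lemma rmorph_prod_powers (R S : comNzRingType) (f : {rmorphism R -> S})
    (l : nat) (v : 'I_l -> R) (k : 'I_l -> nat) :
  f (prod_powers v k) = prod_powers (f \o v) k.
Proof. by rewrite rmorph_prod; apply: eq_bigr => j _; rewrite rmorphXn. Qed.

Section PolyDivisors.
Variable F : fieldType.
Implicit Types p q d : {poly F}.

Lemma dvdp_irredp_exp p k q : irreducible_poly p -> q %| p ^+ k ->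
  exists2 a, (a <= k)%N & q %= p ^+ a.
Proof.
move=> p_irr; elim: k q => [|k IHk] q.
  by rewrite expr0 => q1; exists 0%N; rewrite // expr0 (dvdp_eqp1 q1 (eqpxx 1)).
case: (boolP (p %| q)) => [/dvdpP [q' ->] | p_ndvd_q].
  rewrite exprSr dvdp_mul2r ?irredp_neq0 // => /IHk [a le_ak q'_eq].
  by exists a.+1; rewrite // exprSr eqp_mulr.
have cop_q : coprimep q (p ^+ k.+1).
  by rewrite coprimep_sym coprimep_expl // irreducible_poly_coprime.
rewrite -[p ^+ k.+1]mul1r Gauss_dvdpl // => q1.
by exists 0%N; rewrite // expr0 (dvdp_eqp1 q1 (eqpxx 1)).
Qed.

Lemma eqp_gcdp_mul d p q : coprimep p q -> d %| p * q ->
  d %= gcdp d p * gcdp d q.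
Proof.
move=> cop_pq d_dvd; apply/andP; split.
  rewrite (eqp_dvdr _ (mulp_gcdl _ _ _)) dvdp_gcd dvdp_mulr ?dvdpp //=.
  by rewrite (eqp_dvdr _ (mulp_gcdr _ _ _)) dvdp_gcd dvdp_mull ?dvdpp.
rewrite Gauss_dvdp ?dvdp_gcdl //.
exact: coprimep_dvdl (dvdp_gcdr _ _) (coprimep_dvdr (dvdp_gcdr _ _) cop_pq).
Qed.

Variables (l : nat) (v : 'I_l -> {poly F}) (n : 'I_l -> nat).
Hypothesis v_irr : forall j, irreducible_poly (v j).
Hypothesis v_dist : forall i j, i != j -> ~~ (v i %= v j).

Lemma coprimep_irred_factors i j a b : i != j -> coprimep (v i ^+ a) (v j ^+ b).
Proof.
move=> neq_ij; rewrite coprimep_expl // coprimep_expr // irreducible_poly_coprime //.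
apply: contra (v_dist neq_ij); apply: (v_irr j).
by rewrite neq_ltn (v_irr i).1 orbT.
Qed.

Lemma dvdp_prod_powers_seq (r : seq 'I_l) d : uniq r ->
    d %| \prod_(j <- r) v j ^+ n j ->
  exists2 k : 'I_l -> nat, (forall j, k j <= n j)%N & d %= \prod_(j <- r) v j ^+ k j.
Proof.
elim: r d => [|i r IHr] d /=.
  move=> _; rewrite big_nil => d1; exists (fun=> 0%N) => //.
  by rewrite big_nil (dvdp_eqp1 d1 (eqpxx 1)).
case/andP=> i_notin_r r_uniq; rewrite big_cons => d_dvd.
have cop_i : coprimep (v i ^+ n i) (\prod_(j <- r) v j ^+ n j).
  rewrite big_seq; elim/big_ind: _ => [|x y|j j_r]; first exact: coprimep1.
    by rewrite coprimepMr => -> ->.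
  by apply: coprimep_irred_factors; apply: contraNneq i_notin_r => ->.
have [a le_a gcd_i] := dvdp_irredp_exp (v_irr i) (dvdp_gcdr d (v i ^+ n i)).
have [k le_k gcd_r] := IHr _ r_uniq (dvdp_gcdr d (\prod_(j <- r) v j ^+ n j)).
exists (fun j => if j == i then a else k j).
  by move=> j; case: eqP => [->|].
rewrite big_cons eqxx (eq_big_seq (fun j => v j ^+ k j)); last first.
  by move=> j j_r; case: eqP j_r => // ->; rewrite (negPf i_notin_r).
apply: eqp_trans (eqp_gcdp_mul cop_i d_dvd) _.
exact: eqp_trans (eqp_mulr _ gcd_i) (eqp_mull _ gcd_r).
Qed.

Lemma dvdp_prod_powers d : d %| prod_powers v n ->
  exists2 k : 'I_l -> nat, (forall j, k j <= n j)%N & d %= prod_powers v k.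
Proof. exact: dvdp_prod_powers_seq (index_enum_uniq _). Qed.

Lemma prod_powers_neq0 k : prod_powers v k != 0.
Proof. by apply/prodf_neq0 => j _; rewrite expf_neq0 ?irredp_neq0. Qed.

Lemma size_prod_powers_gt1 : (0 < l)%N -> (forall j, (0 < n j)%N) ->
  (1 < size (prod_powers v n))%N.
Proof.
move=> l_gt0 n_gt0; pose j0 := Ordinal l_gt0.
have vj0_dvd : v j0 %| prod_powers v n.
  by rewrite /prod_powers (bigD1 j0) //= dvdp_mulr // dvdp_exp.
exact: leq_trans (v_irr j0).1 (dvdp_leq (prod_powers_neq0 n) vj0_dvd).
Qed.

End PolyDivisors.

Section PolyIdeal.
Variables (F : fieldType) (L : {poly F} -> Prop).
Hypothesis L_add : forall f g, L f -> L g -> L (f + g).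
Hypothesis L_mul : forall r f, L f -> L (r * f).

Lemma poly_ideal_principal f : f != 0 -> L f ->
  exists2 d, L d & forall g, L g -> d %| g.
Proof.
elim: {f}(size f) {-2}f (leqnn (size f)) => [|N IHN] f.
  by rewrite leqn0 size_poly_eq0 => ->.
move=> size_f f_neq0 Lf.
have [f_gen|] := EM (forall g, L g -> f %| g); first by exists f.
move=> /existsNP [g /not_implyP [Lg f_ndvd_g]].
have mod_neq0 : g %% f != 0 by apply/eqP => /modp_eq0P.
apply: (IHN (g %% f)) => //.
  by rewrite -ltnS (leq_trans _ size_f) // ltn_modp.
have -> : g %% f = g + (- (g %/ f)) * f by rewrite {2}(divp_eq g f); ring.
exact/L_add/L_mul.
Qed.

Variables (l : nat) (v : 'I_l -> {poly F}) (n : 'I_l -> nat).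
Hypothesis v_irr : forall j, irreducible_poly (v j).
Hypothesis v_dist : forall i j, i != j -> ~~ (v i %= v j).

Lemma poly_ideal_prod_powers : L (prod_powers v n) ->
  exists k : 'I_l -> nat, [/\ forall j, (k j <= n j)%N,
    L (prod_powers v k) & forall f, L f -> prod_powers v k %| f].
Proof.
move=> Ln; have [d Ld d_gen] := poly_ideal_principal (prod_powers_neq0 v_irr n) Ln.
have [k le_k /eqpP [[c1 c2] /andP [/= c1_neq0 c2_neq0] c_eq]] :=
  dvdp_prod_powers v_irr v_dist (d_gen _ Ln).
have vk_eq : prod_powers v k = (c2^-1 * c1)%:P * d.
  by rewrite mul_polyC -scalerA c_eq scalerA mulVf // scale1r.
exists k; split => // [|f /d_gen]; first by rewrite vk_eq; apply: L_mul.
by rewrite vk_eq mul_polyC dvdpZl // mulf_neq0 ?invr_neq0.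
Qed.
End PolyIdeal.

Section IdealFacts.
Variable R : comNzRingType.
Implicit Types (x y : R) (I : R -> Prop).

Lemma principal_idealP x y : principal_ideal x y <-> exists c, y = c * x.
Proof.
split=> [[c ->]|[c ->]]; first by exists (c ord0); rewrite big_ord1.
by exists (fun=> c); rewrite big_ord1.
Qed.

Lemma is_idealB I x y : is_ideal I -> I x -> I y -> I (x - y).
Proof. by case=> _ I_add I_mul Ix Iy; rewrite -mulN1r; apply/I_add/I_mul. Qed.

Lemma is_ideal_principal x : is_ideal (principal_ideal x).
Proof.
split=> [|y1 y2|r y]; rewrite !principal_idealP; first by exists 0; rewrite mul0r.
  by move=> [c1 ->] [c2 ->]; exists (c1 + c2); rewrite mulrDl.
by move=> [c ->]; exists (r * c); rewrite mulrA.
Qed.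

Lemma is_idealI I J : is_ideal I -> is_ideal J -> is_ideal (fun y => I y /\ J y).
Proof.
case=> I0 I_add I_mul [J0 J_add J_mul]; split=> // [y1 y2 [] ? ? [] ? ?|r y [] ? ?].
  by split; [apply: I_add | apply: J_add].
by split; [apply: I_mul | apply: J_mul].
Qed.

Variables (N : nat) (G : 'I_N -> R).

Lemma gen_ideal_is_ideal : is_ideal (gen_ideal G).
Proof.
split=> [|y1 y2 [c1 ->] [c2 ->]|r y [c ->]].
- by exists (fun=> 0); rewrite big1 // => a _; rewrite mul0r.
- exists (fun a => c1 a + c2 a).
  by rewrite -big_split; apply: eq_bigr => a _; rewrite mulrDl.
- exists (fun a => r * c a).
  by rewrite mulr_sumr; apply: eq_bigr => a _; rewrite mulrA.
Qed.

Lemma gen_ideal_gen a : gen_ideal G (G a).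
Proof.
exists (fun b => (b == a)%:R); rewrite (bigD1 a) //= eqxx mul1r big1 ?addr0 //.
by move=> b /negbTE ->; rewrite mul0r.
Qed.

Lemma gen_ideal_min I : is_ideal I -> (forall a, I (G a)) -> ideal_sub (gen_ideal G) I.
Proof.
case=> I0 I_add I_mul IG y [c ->].
by elim/big_ind: _ => // a _; apply: I_mul.
Qed.

End IdealFacts.

Section Levels.
Variables (F : fieldType) (R : comNzRingType) (e : {rmorphism {poly F} -> R}).
Variables (u : R) (t : nat).
Hypothesis u_nilp : u ^+ t = 0.
Hypothesis decomp : forall y, exists f z, y = e f + u * z.
Variables (l : nat) (v : 'I_l -> {poly F}) (n : 'I_l -> nat).
Hypothesis v_irr : forall j, irreducible_poly (v j).
Hypothesis v_dist : forall i j, i != j -> ~~ (v i %= v j).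
Hypothesis prod_powers_in_u : exists z, e (prod_powers v n) = u * z.
Variable I : R -> Prop.
Hypothesis I_ideal : is_ideal I.

Definition level (j : nat) (f : {poly F}) : Prop :=
  exists z, I (u ^+ j * e f + u ^+ j.+1 * z).

Definition level_gen (k : 'I_l -> nat) (z : R) (j : nat) : R :=
  u ^+ j * e (prod_powers v k) + u ^+ j.+1 * z.

Definition deficient (k : 'I_l -> nat) : bool := [exists j, (k j < n j)%N].

Lemma level_generators : exists (K : nat -> 'I_l -> nat) (Z : nat -> R),
  [/\ forall j i, (K j i <= n i)%N, forall j, I (level_gen (K j) (Z j) j) &
      forall j f, level j f -> prod_powers v (K j) %| f].
Proof.
have [I0 I_add I_mul] := I_ideal.
have [zn e_vn] := prod_powers_in_u.
have level_gen_ex j : exists k : 'I_l -> nat, [/\ forall i, (k i <= n i)%N,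
    level j (prod_powers v k) & forall f, level j f -> prod_powers v k %| f].
  apply: poly_ideal_prod_powers v_irr v_dist _ => [f g [zf If] [zg Ig]|r f [z If]|].
  - by exists (zf + zg); have := I_add _ _ If Ig; congr I; rewrite rmorphD exprSr; ring.
  - by exists (e r * z); have := I_mul (e r) _ If; congr I; rewrite rmorphM exprSr; ring.
  - by exists (- zn); rewrite e_vn exprSr mulrA mulrN subrr.
have [K K_spec] := choice level_gen_ex.
have Z_ex j : exists z, I (level_gen (K j) z j).
  by have [_ [z Iz] _] := K_spec j; exists z.
have [Z Z_spec] := choice Z_ex.
by exists K, Z; split=> [j|//|j]; case: (K_spec j).
Qed.

Variables (K : nat -> 'I_l -> nat) (Z : nat -> R).
Hypothesis K_le : forall j i, (K j i <= n i)%N.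
Hypothesis I_level_gen : forall j, I (level_gen (K j) (Z j) j).
Hypothesis K_min : forall j f, level j f -> prod_powers v (K j) %| f.

Lemma level_decomp j y : I y -> (exists z, y = u ^+ j * z) ->
  exists a z', y = e a * level_gen (K j) (Z j) j + u ^+ j.+1 * z'.
Proof.
move=> Iy [z y_eq]; have [f [z' z_eq]] := decomp z.
have /K_min /dvdpP [a f_eq] : level j f.
  by exists z'; rewrite exprSr -mulrA -mulrDr -z_eq -y_eq.
exists a, (z' - e a * Z j).
by rewrite y_eq z_eq f_eq /level_gen rmorphM exprSr; ring.
Qed.

Lemma level_gen_full j : ~~ deficient (K j) ->
  exists z, level_gen (K j) (Z j) j = u ^+ j.+1 * z.
Proof.
move=> full; have [zn e_vn] := prod_powers_in_u; rewrite /level_gen.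
have -> : prod_powers v (K j) = prod_powers v n.
  apply: eq_bigr => i _; congr (_ ^+ _); apply/eqP; rewrite eqn_leq K_le /=.
  by rewrite leqNgt; apply: contra full => lt_i; apply/existsP; exists i.
by exists (zn + Z j); rewrite e_vn exprSr; ring.
Qed.

Lemma level_descent (N : nat) (G : 'I_N -> R) :
    (forall j, (0 < j < t)%N -> deficient (K j) ->
       gen_ideal G (level_gen (K j) (Z j) j)) ->
  forall y, I y -> principal_ideal u y -> gen_ideal G y.
Proof.
move=> G_gen; have [G0 G_add G_mul] := gen_ideal_is_ideal G.
suff descent d : (d < t)%N ->
    forall y, I y -> (exists z, y = u ^+ (t - d) * z) -> gen_ideal G y.
  have t_gt0 : (0 < t)%N by case: t u_nilp => // /eqP; rewrite expr0 oner_eq0.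
  move=> y Iy /principal_idealP [c y_eq]; apply: (descent t.-1); [lia | done |].
  by exists c; rewrite (_ : t - t.-1 = 1)%N; [rewrite expr1 mulrC | lia].
elim: d => [_ y _ [z ->]|d IHd lt_dt y Iy y_in].
  by rewrite subn0 u_nilp mul0r.
have [a [z' y_eq]] := level_decomp Iy y_in.
have succ_level : ((t - d.+1).+1 = t - d)%N by lia.
rewrite succ_level in y_eq.
case: (boolP (deficient (K (t - d.+1)))) => [def|full].
  rewrite y_eq; apply/G_add; first by apply/G_mul/G_gen => //; lia.
  apply: IHd; [lia | | by exists z'].
  have -> : u ^+ (t - d) * z' =
      y - e a * level_gen (K (t - d.+1)) (Z (t - d.+1)) (t - d.+1).
    by rewrite y_eq addrC addKr.
  by apply: is_idealB => //; have [_ _ I_mul] := I_ideal; apply: I_mul.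
have [z0 gen_eq] := level_gen_full full.
apply: IHd => //; first lia.
by exists (e a * z0 + z'); rewrite y_eq gen_eq -succ_level; ring.
Qed.

Lemma ideal_sub_u_classification : ideal_sub I (principal_ideal u) ->
  exists (N : nat) (idx : 'I_N -> nat) (k : 'I_N -> 'I_l -> nat) (g : 'I_N -> R),
    [/\ forall a b : 'I_N, (a < b)%N -> (idx a < idx b)%N,
        forall a, (idx a + 2 <= t)%N,
        forall a j, (k a j <= n j)%N,
        forall a, exists j, (k a j < n j)%N &
        ideal_eq I (gen_ideal (fun a : 'I_N =>
          u ^+ (t.-1 - idx a) * prod_powers (e \o v) (k a) - u ^+ (t - idx a) * g a))].
Proof.
move=> I_sub_u.
(* The paper's generator index i is the level j = t-1-i; A lists the i of the
   deficient levels in increasing order. *)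
pose A := [seq i <- iota 0 t.-1 | deficient (K (t.-1 - i))].
have memA i : (i \in A) = deficient (K (t.-1 - i)) && (i < t.-1)%N.
  by rewrite mem_filter mem_iota.
have A_sorted : sorted ltn A.
  by apply: sorted_filter; [exact: ltn_trans | exact: iota_ltn_sorted].
pose idx (a : 'I_(size A)) := nth 0%N A a.
have idxA a : idx a \in A by apply: mem_nth.
exists (size A), idx, (fun a => K (t.-1 - idx a)), (fun a => - Z (t.-1 - idx a)); split.
- by move=> a b; apply: (sorted_ltn_nth ltn_trans 0%N A_sorted); rewrite inE.
- by move=> a; have := idxA a; rewrite memA => /andP [_]; lia.
- by move=> a; apply: K_le.
- by move=> a; have := idxA a; rewrite memA => /andP [/existsP [j lt_j] _]; exists j.
have -> : (fun a => u ^+ (t.-1 - idx a) * prod_powers (e \o v) (K (t.-1 - idx a))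
                    - u ^+ (t - idx a) * - Z (t.-1 - idx a))
        = (fun a => level_gen (K (t.-1 - idx a)) (Z (t.-1 - idx a)) (t.-1 - idx a)).
  apply: funext => a; rewrite /level_gen rmorph_prod_powers mulrN opprK.
  have := idxA a; rewrite memA => /andP [_ lt_a].
  by rewrite (_ : t - idx a = (t.-1 - idx a).+1)%N //; lia.
move=> y; split=> [Iy|]; last by apply: gen_ideal_min => // a; apply: I_level_gen.
apply: level_descent (I_sub_u _ Iy) => // j /andP [j_gt0 lt_jt] def_j.
have jA : (t.-1 - j)%N \in A by rewrite memA subKn ?def_j /=; lia.
have [a a_eq] : exists a : 'I_(size A), idx a = (t.-1 - j)%N.
  by exists (Ordinal (etrans (index_mem _ _) jA)); rewrite /idx nth_index.
by rewrite -[j](@subKn _ t.-1) -?a_eq; [apply: gen_ideal_gen | lia].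
Qed.

Lemma ideal_level0_decomposition :
  exists (k : 'I_l -> nat) (r : R) (J : R -> Prop),
    [/\ forall j, (k j <= n j)%N, is_ideal J, ideal_sub J (principal_ideal u) &
        ideal_eq I (ideal_sum (principal_ideal (prod_powers (e \o v) k + u * r)) J)].
Proof.
have gen0 : level_gen (K 0%N) (Z 0%N) 0 = prod_powers (e \o v) (K 0%N) + u * Z 0%N.
  by rewrite /level_gen expr0 mul1r expr1 rmorph_prod_powers.
exists (K 0%N), (Z 0%N), (fun y => I y /\ principal_ideal u y); split => //.
- exact/is_idealI/is_ideal_principal.
- by move=> y [].
have [_ I_add I_mul] := I_ideal.
move=> y; split=> [Iy|[a [b [/principal_idealP [c ->] [Ib _] ->]]]]; last first.
  by apply: I_add => //; apply: I_mul; rewrite -gen0.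
have [|a [z y_eq]] := @level_decomp 0%N y Iy; first by exists y; rewrite expr0 mul1r.
exists (e a * level_gen (K 0%N) (Z 0%N) 0), (y - e a * level_gen (K 0%N) (Z 0%N) 0).
split; last by rewrite addrC subrK.
- by apply/principal_idealP; exists (e a); rewrite gen0.
- split; first by apply: is_idealB => //; apply: I_mul.
  by apply/principal_idealP; exists z; rewrite y_eq addrC addKr expr1 mulrC.
Qed.

End Levels.

Section TruncatedPoly.
Variables (A : comNzRingType) (t : nat).
Local Notation Xt := ('X^(t.+1) : {poly A}).
Local Notation T := {poly %/ Xt}.

Lemma mk_monic_Xt : mk_monic Xt = Xt.
Proof. exact: mk_monic_Xn. Qed.

Lemma in_qpoly_val (c : T) : in_qpoly Xt (c : {poly A}) = c.
Proof. by apply: val_inj; apply: in_qpoly_small (size_mk_monic _). Qed.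

Lemma coef0_in_qpoly (p : {poly A}) : (in_qpoly Xt p : {poly A})`_0 = p`_0.
Proof.
rewrite /= mk_monic_Xt [in RHS](Pdiv.RingMonic.rdivp_eq (monicXn A t.+1) p).
by rewrite coefD coefMXn add0r.
Qed.

Definition qpoly_coef0 (c : T) : A := (c : {poly A})`_0.

Lemma qpoly_coef0_is_zmod_morphism : zmod_morphism qpoly_coef0.
Proof. by move=> a b; rewrite /qpoly_coef0 -coefB. Qed.

Lemma qpoly_coef0_is_monoid_morphism : monoid_morphism qpoly_coef0.
Proof.
split=> [|a b]; first by rewrite /qpoly_coef0 /= coefC.
by rewrite /qpoly_coef0 -[a]in_qpoly_val -[b]in_qpoly_val -rmorphM !coef0_in_qpoly coef0M.
Qed.

HB.instance Definition _ :=
  GRing.isZmodMorphism.Build T A qpoly_coef0 qpoly_coef0_is_zmod_morphism.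
HB.instance Definition _ :=
  GRing.isMonoidMorphism.Build T A qpoly_coef0 qpoly_coef0_is_monoid_morphism.

Lemma qpoly_coef0C a : qpoly_coef0 (qpolyC Xt a) = a.
Proof. by rewrite /qpoly_coef0 qpolyCE coefC. Qed.

Lemma qpoly_coef0X : qpoly_coef0 (qpolyX Xt) = 0.
Proof. by rewrite /qpoly_coef0 coef0_in_qpoly coefX. Qed.

Lemma qpolyX_nilp : qpolyX Xt ^+ t.+1 = 0.
Proof.
apply: val_inj; rewrite /qpolyX -rmorphXn /= mk_monic_Xt.
exact: Pdiv.RingMonic.rmodpp (monicXn A t.+1).
Qed.

Definition qpoly_divX (c : T) : T := in_qpoly Xt (drop_poly 1 (c : {poly A})).

Lemma qpoly_divX0 : qpoly_divX 0 = 0.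
Proof. by rewrite /qpoly_divX drop_poly0r in_qpoly0. Qed.

Lemma qpoly_coef0_divX (c : T) : c = qpolyC Xt (qpoly_coef0 c) + qpolyX Xt * qpoly_divX c.
Proof.
rewrite -{1}[c]in_qpoly_val -[c : {poly A}](poly_take_drop 1) expr1.
have -> : take_poly 1 (c : {poly A}) = (qpoly_coef0 c)%:P.
  by apply/polyP => i; rewrite coef_take_poly coefC; case: i.
rewrite rmorphD rmorphM mulrC; congr (_ + _).
apply: val_inj; apply: in_qpoly_small.
by rewrite mk_monic_Xt size_polyXn size_polyC (leq_ltn_trans (leq_b1 _)).
Qed.

End TruncatedPoly.

Section TruncatedQuotient.
Variables (F : finFieldType) (t : nat) (w : nat -> {poly F}).
Local Notation Xt := ('X^(t.+1) : {poly F}).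
Local Notation pi := (\pi_(Rtw t.+1 w)).
Local Notation coef0q := (@qpoly_coef0 F t).

(* Convertible to [embW t.+1 w]. *)
Definition embW_rmorphism : {rmorphism {poly F} -> Rtw t.+1 w} :=
  (pi \o map_poly (qpolyC Xt))%FUN.

Lemma uW_nilp : uW t.+1 w ^+ t.+1 = 0.
Proof.
rewrite /uW /uRt -2!rmorphXn (_ : qpolyX Xt ^+ t.+1 = 0 :> Rt F t.+1) ?polyC0 ?raddf0 //.
exact: qpolyX_nilp.
Qed.

Lemma Rtw_decomp y : exists f z, y = embW_rmorphism f + uW t.+1 w * z.
Proof.
exists (map_poly coef0q (repr y)), (pi (map_poly (@qpoly_divX F t) (repr y))).
rewrite /= -rmorphM -rmorphD -{1}[y]reprK; congr pi.
apply/polyP => i; rewrite coefD coefCM !coef_map /= (coef_map_id0 _ _ (@qpoly_divX0 F t)).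
exact: qpoly_coef0_divX.
Qed.

Lemma map_coef0_omega : map_poly coef0q (omega t.+1 w) = w 0%N.
Proof.
have map_u : map_poly coef0q (uRt F t.+1) = 0.
  apply/polyP => k; rewrite coef_map /uRt coefC coef0.
  by case: eqP => _; [exact: qpoly_coef0X | exact: raddf0].
rewrite /omega rmorph_sum big_ord_recl big1 => [|i _].
  rewrite expr0 mul1r addr0; apply/polyP => i.
  by rewrite !coef_map /= qpoly_coef0C.
rewrite rmorphM rmorphXn -[X in X ^+ _ * _]/(map_poly coef0q (uRt F t.+1)).
by rewrite map_u expr0n mul0r.
Qed.

Hypothesis w0_nonconst : (1 < size (w 0%N))%N.

Lemma pi_omega : pi (omega t.+1 w) = 0.
Proof.
have omega_nonunit : ~ exists c, c * omega t.+1 w = 1.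
  move=> [c /(congr1 (map_poly coef0q))]; rewrite rmorphM rmorph1.
  rewrite -[X in _ * X]/(map_poly coef0q (omega t.+1 w)) map_coef0_omega.
  move=> /(congr1 (dvdp (w 0%N))); rewrite dvdp_mull // dvdp1 => /esym/eqP w0_1.
  by move: w0_nonconst; rewrite w0_1.
rewrite -(raddf0 pi); apply/eqquotP.
rewrite /Quotient.equiv subr0 unfold_in /pideal_pred.
rewrite (_ : `[< ~ exists c, c * omega t.+1 w = 1 >] = true); last exact/asboolP.
by apply/asboolP; exists 1; rewrite mul1r.
Qed.

Lemma embW_w0_in_u : exists z, embW t.+1 w (w 0%N) = uW t.+1 w * z.
Proof.
pose S := \sum_(i < t) uRt F t.+1 ^+ i * embRt t.+1 (w i.+1).
have omega_eq : omega t.+1 w = embRt t.+1 (w 0%N) + uRt F t.+1 * S.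
  rewrite /omega big_ord_recl expr0 mul1r /S mulr_sumr; congr (_ + _).
  by apply: eq_bigr => i _; rewrite exprS mulrA.
exists (- pi S); rewrite /embW /uW mulrN -rmorphM -rmorphN.
apply/eqP; rewrite -subr_eq0 -rmorphB opprK -omega_eq; exact/eqP/pi_omega.
Qed.

End TruncatedQuotient.

Theorem theorem3p2
  (p m t : nat) (F : finFieldType)
  (p_prime : prime p) (m_gt0 : (0 < m)%N) (t_gt0 : (0 < t)%N)
  (cardF : #|F| = (p ^ m)%N)
  (w : nat -> {poly F})
  (l : nat) (v : 'I_l -> {poly F}) (n : 'I_l -> nat)
  (l_gt0 : (0 < l)%N)
  (v_irr : forall j, irreducible_poly (v j))
  (v_dist : forall i j, i != j -> ~~ (v i %= v j))
  (n_gt0 : forall j, (0 < n j)%N)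
  (w0_fact : w 0%N = \prod_(j < l) v j ^+ n j) :
  let R := Rtw t w in
  let u : R := uW t w in
  let V (k : 'I_l -> nat) : R := \prod_(j < l) embW t w (v j) ^+ k j in
  forall I : R -> Prop, is_ideal I ->
    (* (a) trivial ideals *)
    trivial_ideal I
    \/
    (* (b) ideals contained in <u> *)
    (ideal_sub I (principal_ideal u) /\
     exists (N : nat) (idx : 'I_N -> nat) (k : 'I_N -> 'I_l -> nat)
            (g : 'I_N -> R),
       [/\ forall a b : 'I_N, (a < b)%N -> (idx a < idx b)%N,
           forall a, (idx a + 2 <= t)%N,
           forall a j, (k a j <= n j)%N,
           forall a, exists j, (k a j < n j)%N &
           ideal_eq I (gen_ideal (fun a : 'I_N =>
              u ^+ (t.-1 - idx a) * V (k a) - u ^+ (t - idx a) * g a))])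
    \/
    (* (c) ideals not contained in <u> *)
    (~ ideal_sub I (principal_ideal u) /\
     exists (k : 'I_l -> nat) (r : R) (J : R -> Prop),
       [/\ forall j, (k j <= n j)%N,
           is_ideal J,
           ideal_sub J (principal_ideal u) &
           ideal_eq I (ideal_sum (principal_ideal (V k + u * r)) J)]).
Proof.
case: t t_gt0 => // t _ R u V I I_ideal; right.
have w0_nonconst : (1 < size (w 0%N))%N.
  by rewrite w0_fact; exact: size_prod_powers_gt1.
have w0_in_u : exists z, embW_rmorphism t w (prod_powers v n) = u * z.
  by rewrite /prod_powers -w0_fact; exact: embW_w0_in_u.
have [K [Z [K_le I_gen K_min]]] := level_generators v_irr v_dist w0_in_u I_ideal.
have [I_sub_u | I_nsub_u] := EM (ideal_sub I (principal_ideal u)); [left | right].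
  split=> //; exact (ideal_sub_u_classification (@uW_nilp F t w) (@Rtw_decomp F t w)
    w0_in_u I_ideal K_le I_gen K_min I_sub_u).
split=> //; exact (ideal_level0_decomposition (@Rtw_decomp F t w) I_ideal K_le I_gen K_min).
Qed.
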